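(* Let $k\ge3$. There exist $n_0(k)$ and $C_k$ such that for all $n\ge n_0(k)$ and all $\gamma$ with $|\gamma-\frac12|\le n^{-1/3}$, there exists a unique $\lambda=\lambda(\gamma)\in\mathbb R$ with $\sum_{j=1}^{k-1}j\,\nu_{\gamma,\lambda}(j)=k\gamma$. Furthermore $\lambda(1/2)=0$ and $|\lambda(\gamma)|\le C_k n^{-1/3}$ for all such $\gamma$.
   Context: For $\gamma\in(0,1)$ let $p_\gamma(j)=\binom kj\gamma^j(1-\gamma)^{k-j}$, and for $\lambda\in\mathbb R$ define the probability measure $\nu_{\gamma,\lambda}$ on $\{1,\dots,k-1\}$ by $\nu_{\gamma,\lambda}(j)=p_\gamma(j)e^{\lambda j}/\sum_{i=1}^{k-1}p_\gamma(i)e^{\lambda i}$. *)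

From HB Require Import structures.
From mathcomp Require Import all_boot all_order all_algebra.
From mathcomp Require Import all_classical all_reals all_analysis.
Set Implicit Arguments. Unset Strict Implicit. Unset Printing Implicit Defensive.
Import Order.TTheory GRing.Theory Num.Theory.
Local Open Scope ring_scope.

Definition pgam {R : realType} (k : nat) (g : R) (j : nat) : R :=
  'C(k, j)%:R * g ^+ j * (1 - g) ^+ (k - j).

Definition nu {R : realType} (k : nat) (g l : R) (j : nat) : R :=
  pgam k g j * expR (l * j%:R) /
  (\sum_(1 <= i < k) pgam k g i * expR (l * i%:R)).

Definition nu_mean {R : realType} (k : nat) (g l : R) : R :=
  \sum_(1 <= j < k) j%:R * nu k g l j.

From mathcomp Require Import all_boot all_order all_algebra.
From mathcomp Require Import all_classical all_reals all_analysis.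
From mathcomp Require Import ring lra.
Import Order.TTheory GRing.Theory Num.Theory.
Import numFieldNormedType.Exports.
Local Open Scope ring_scope.

(** Write [t_j = j - k g].  Then [nu_mean k g l = k g] iff
    [drift k g l = \sum_j p_g(j) t_j e^(l t_j)] vanishes.  Each summand is
    nondecreasing in [l] and the [j = 1] summand is strictly increasing, so a
    root is unique.  At [l = 0] the drift is the centred binomial mean (which
    is 0) minus its boundary terms [j = 0, k], hence at most
    [2 k^2 |g - 1/2|]; by [t e^(dt) >= t (1 + dt / (k+1))] it moves by at
    least [d 4^-k / (16 (k+1))] at [l = +-d].  With [d = C_k n^(-1/3)] this
    gives [drift (-d) <= 0 <= drift d], and the intermediate value theorem
    provides the root. *)

Section Tilt.
Variable R : realType.
Implicit Types (g l d t x K : R) (k j : nat).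

Definition centered k g j : R := j%:R - k%:R * g.

Definition drift k g l : R :=
  \sum_(1 <= j < k) pgam k g j * (centered k g j * expR (l * centered k g j)).

Lemma pgam_ge0 k g j : 0 <= g <= 1 -> 0 <= pgam k g j.
Proof.
by move=> /andP[g0 g1]; rewrite /pgam !mulr_ge0 ?exprn_ge0 ?subr_ge0.
Qed.

Lemma pgam1 k g : pgam k g 1 = k%:R * g * (1 - g) ^+ (k - 1).
Proof. by rewrite /pgam bin1 expr1. Qed.

Lemma sum_pgam k g : \sum_(0 <= j < k.+1) pgam k g j = 1.
Proof.
rewrite big_mkord; have := exprDn (1 - g) g k; rewrite subrK expr1n => ->.
by apply: eq_bigr => i _; rewrite /pgam -mulr_natl; ring.
Qed.

Lemma sum_pgam_mean k g : \sum_(0 <= j < k.+1) j%:R * pgam k g j = k%:R * g.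
Proof.
case: k => [|k]; first by rewrite big_nat1 !mul0r.
rewrite big_nat_recl // mul0r add0r.
transitivity (k.+1%:R * g * \sum_(0 <= i < k.+1) pgam k g i); last first.
  by rewrite sum_pgam mulr1.
rewrite mulr_sumr; apply: eq_bigr => i _; rewrite /pgam subSS exprS.
have e : i.+1%:R * 'C(k.+1, i.+1)%:R = k.+1%:R * 'C(k, i)%:R :> R.
  by rewrite -!natrM mul_bin_diag.
by rewrite !mulrA e; ring.
Qed.

Lemma sum_pgam_centered k g : (0 < k)%N ->
  \sum_(1 <= j < k) pgam k g j * centered k g j =
  k%:R * g * (1 - g) ^+ k - k%:R * (1 - g) * g ^+ k.
Proof.
move=> k0.
have full : \sum_(0 <= j < k.+1) pgam k g j * centered k g j = 0.
  under eq_bigr do rewrite /centered mulrBr.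
  rewrite sumrB -mulr_suml sum_pgam mul1r.
  by under eq_bigr do rewrite mulrC; rewrite sum_pgam_mean subrr.
move: full; rewrite big_nat_recr // big_ltn // /centered /pgam.
rewrite bin0 binn subn0 subnn !expr0 !mulr1 !mul1r => h.
set s := \sum_(1 <= j < k) _ in h *.
by rewrite -[LHS]subr0 -h /=; ring.
Qed.

Lemma norm_subXX_le x y m : 0 <= x <= 1 -> 0 <= y <= 1 ->
  `|x ^+ m - y ^+ m| <= m%:R * `|x - y|.
Proof.
move=> /andP[x0 x1] /andP[y0 y1]; elim: m => [|m IH].
  by rewrite !expr0 subrr normr0 mul0r.
have -> : x ^+ m.+1 - y ^+ m.+1 = x * (x ^+ m - y ^+ m) + (x - y) * y ^+ m
  by rewrite !exprS; ring.
rewrite -natr1 (mulrDl _ 1) mul1r; apply: (le_trans (ler_normD _ _)).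
rewrite !normrM (ger0_norm x0) (ger0_norm (exprn_ge0 m y0)).
apply: lerD; first by apply: le_trans IH; apply: ler_piMl.
by apply: ler_piMr; rewrite ?exprn_ile1.
Qed.

Lemma norm_sum_pgam_centered_le k g : (0 < k)%N -> 0 <= g <= 1 ->
  `|\sum_(1 <= j < k) pgam k g j * centered k g j| <=
  2 * k%:R ^+ 2 * `|g - 2^-1|.
Proof.
case: k => [//|k] _ /andP[g0 g1]; rewrite sum_pgam_centered //.
have -> : k.+1%:R * g * (1 - g) ^+ k.+1 - k.+1%:R * (1 - g) * g ^+ k.+1
  = (k.+1%:R * g * (1 - g)) * ((1 - g) ^+ k - g ^+ k) by rewrite !exprS; ring.
have h1 : `|k.+1%:R * g * (1 - g)| <= k.+1%:R.
  rewrite ger0_norm ?mulr_ge0 ?subr_ge0 // -mulrA ler_piMr //; apply: mulr_ile1; lra.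
have h2 : `|(1 - g) ^+ k - g ^+ k| <= k.+1%:R * (2 * `|g - 2^-1|).
  have hg : 0 <= g <= 1 by rewrite g0 g1.
  have hg' : 0 <= 1 - g <= 1 by apply/andP; split; lra.
  apply: le_trans (norm_subXX_le _ _ k hg' hg) _.
  rewrite (_ : 1 - g - g = - 2 * (g - 2^-1)); last by field.
  by rewrite normrM normrN normr_nat ler_wpM2r ?mulr_ge0 // ler_nat.
have -> : 2 * k.+1%:R ^+ 2 * `|g - 2^-1| = k.+1%:R * (k.+1%:R * (2 * `|g - 2^-1|)).
  by ring.
by rewrite normrM; apply: ler_pM h1 h2.
Qed.

Lemma expRN_le x K : 0 <= x -> x <= K - 1 -> expR (- x) <= 1 - x / K.
Proof.
move=> x0 xK; have K0 : 0 < K by lra.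
have x1 : 0 < 1 + x by lra.
have inv : (1 + x) * expR (- x) <= 1.
  by rewrite -[X in _ <= X](expR0 R) -(subrr x) expRD ler_wpM2r ?expR_ge0 ?expR_ge1Dx.
rewrite -(ler_pM2l x1); apply: le_trans inv _.
rewrite -subr_ge0 (_ : _ - 1 = x * (K - 1 - x) / K); last by field; rewrite gt_eqF.
by rewrite divr_ge0 ?mulr_ge0 ?subr_ge0 // ltW.
Qed.

Lemma mul_expR_ge t d K : 0 <= d -> d * `|t| <= K - 1 ->
  t * (1 + d * t / K) <= t * expR (d * t).
Proof.
move=> d0 dtK; have K1 : 1 <= K by have := mulr_ge0 d0 (normr_ge0 t); lra.
have [t0|t0] := lerP 0 t.
- rewrite ler_wpM2l //; apply: le_trans (expR_ge1Dx _); rewrite lerD2l.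
  by rewrite ler_pdivrMr ?ler_peMr ?mulr_ge0 //; lra.
- rewrite ler_nM2l //; rewrite ltr0_norm // mulrN in dtK.
  have := @expRN_le (- (d * t)) K; rewrite opprK mulNr opprK; apply => //.
  by rewrite oppr_ge0 mulr_ge0_le0 // ltW.
Qed.

Lemma mul_norm_centered_le k g j d : 0 <= g <= 1 -> 0 <= d <= 1 -> (j <= k)%N ->
  d * `|centered k g j| <= k%:R.
Proof.
move=> /andP[g0 g1] /andP[_ d1] jk; apply: le_trans (ler_piMl (normr_ge0 _) d1) _.
rewrite /centered ler_norml.
have kg : k%:R * g <= k%:R by rewrite ler_piMr.
have := ler0n R j; have := mulr_ge0 (ler0n R k) g0.
by rewrite -(ler_nat R) in jk; lra.
Qed.

Lemma drift_ge k g d : 0 <= g <= 1 -> 0 <= d <= 1 ->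
  \sum_(1 <= j < k) pgam k g j * centered k g j
  + d / (k%:R + 1) * \sum_(1 <= j < k) pgam k g j * centered k g j ^+ 2
  <= drift k g d.
Proof.
move=> hg hd; rewrite mulr_sumr -big_split /=; apply: ler_sum_nat.
move=> j /andP[_ /ltnW jk]; set t := centered k g j.
have d0 : 0 <= d by case/andP: hd.
have dtK : d * `|t| <= k%:R + 1 - 1 by rewrite addrK mul_norm_centered_le.
have -> : pgam k g j * t + d / (k%:R + 1) * (pgam k g j * t ^+ 2)
    = pgam k g j * (t * (1 + d * t / (k%:R + 1))).
  by ring.
exact: (ler_wpM2l (pgam_ge0 k g j hg) (mul_expR_ge _ _ _ d0 dtK)).
Qed.

Lemma drift_le k g d : 0 <= g <= 1 -> 0 <= d <= 1 ->
  drift k g (- d) <=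
  \sum_(1 <= j < k) pgam k g j * centered k g j
  - d / (k%:R + 1) * \sum_(1 <= j < k) pgam k g j * centered k g j ^+ 2.
Proof.
move=> hg hd; rewrite mulr_sumr -sumrB /=; apply: ler_sum_nat.
move=> j /andP[_ /ltnW jk]; set t := centered k g j.
have d0 : 0 <= d by case/andP: hd.
have dtK : d * `|- t| <= k%:R + 1 - 1 by rewrite addrK normrN mul_norm_centered_le.
have tE := mul_expR_ge _ _ _ d0 dtK; rewrite !mulNr lerN2 in tE.
rewrite mulNr -mulrN.
have -> : pgam k g j * t - d / (k%:R + 1) * (pgam k g j * t ^+ 2)
    = pgam k g j * (t * (1 + d * - t / (k%:R + 1))).
  by ring.
exact: (ler_wpM2l (pgam_ge0 k g j hg) tE).
Qed.

Lemma ler_mul_expR t l l' : l <= l' -> t * expR (l * t) <= t * expR (l' * t).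
Proof.
move=> ll'; have [t0|t0|->] := ltrgt0P t; last by rewrite !mul0r.
- by rewrite ler_pM2l // ler_expR ler_pM2r.
- by rewrite ler_nM2l // ler_expR ler_nM2r.
Qed.

Lemma ltr_mul_expR t l l' : t != 0 -> l < l' -> t * expR (l * t) < t * expR (l' * t).
Proof.
move=> t0 ll'; have [tp|tn|t0'] := ltrgt0P t; last by rewrite t0' eqxx in t0.
- by rewrite ltr_pM2l // ltr_expR ltr_pM2r.
- by rewrite ltr_nM2l // ltr_expR ltr_nM2r.
Qed.

Lemma pgam1_gt0 k g : (0 < k)%N -> 0 < g < 1 -> 0 < pgam k g 1.
Proof.
by move=> k0 /andP[g0 g1]; rewrite pgam1 !mulr_gt0 ?exprn_gt0 ?subr_gt0 ?ltr0n.
Qed.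

Lemma drift_lt k g : (1 < k)%N -> 0 < g < 1 -> centered k g 1 != 0 ->
  {homo drift k g : l l' / l < l'}.
Proof.
move=> k1 hg t1 l l' ll'; rewrite /drift !(big_ltn k1) /=.
apply: ltr_leD; first by rewrite ltr_pM2l ?pgam1_gt0 ?ltr_mul_expR // ltnW.
apply: ler_sum_nat => j _; apply: ler_wpM2l; last exact: ler_mul_expR (ltW ll').
by apply: pgam_ge0; case/andP: hg => g0 g1; rewrite !ltW.
Qed.

Lemma drift_inj k g : (1 < k)%N -> 0 < g < 1 -> centered k g 1 != 0 ->
  injective (drift k g).
Proof.
by move=> k1 hg t1; exact/inc_inj/le_mono/drift_lt.
Qed.

Lemma continuous_sum (T : topologicalType) (s : seq nat) (f : nat -> T -> R) :
  (forall i, continuous (f i)) -> continuous (fun z => \sum_(i <- s) f i z).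
Proof.
move=> fc; elim: s => [|a s IH] z.
  under eq_fun do rewrite big_nil; exact: cvg_cst.
under eq_fun do rewrite big_cons; exact: continuousD (fc a z) (IH z).
Qed.

Lemma continuous_drift k g : continuous (drift k g).
Proof.
apply: continuous_sum => j l; apply: cvgM; first exact: cvg_cst.
apply: cvgM; first exact: cvg_cst.
apply: (continuous_comp (f := fun l => l * centered k g j)); last exact: continuous_expR.
by apply: cvgM; [exact: cvg_id | exact: cvg_cst].
Qed.

Lemma nu_mean_eq_iff_drift_eq0 k g l : (1 < k)%N -> 0 < g < 1 ->
  nu_mean k g l = k%:R * g <-> drift k g l = 0.
Proof.
move=> k1 hg; have hg' : 0 <= g <= 1 by case/andP: hg => g0 g1; rewrite !ltW.
set c := k%:R * g.
set D := \sum_(1 <= i < k) pgam k g i * expR (l * i%:R).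
set N := \sum_(1 <= j < k) j%:R * pgam k g j * expR (l * j%:R).
have D0 : 0 < D.
  rewrite /D big_ltn //=; apply: ltr_pwDl.
    by rewrite mulr_gt0 ?expR_gt0 ?pgam1_gt0 // ltnW.
  by apply: sumr_ge0 => i _; rewrite mulr_ge0 ?expR_ge0 ?pgam_ge0.
have -> : nu_mean k g l = N / D.
  by rewrite /nu_mean /nu /N mulr_suml; apply: eq_bigr => j _; rewrite /D; ring.
have -> : drift k g l = expR (- (l * c)) * (N - c * D).
  rewrite /drift /N /D mulr_sumr -sumrB mulr_sumr; apply: eq_bigr => j _.
  by rewrite /centered -/c mulrBr expRD; ring.
split => [<-|/eqP]; first by rewrite divfK ?gt_eqF // subrr mulr0.
by rewrite mulf_eq0 gt_eqF ?expR_gt0 //= subr_eq0 => /eqP ->; rewrite mulfK ?gt_eqF.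
Qed.

Lemma nu_mean_half k : (1 < k)%N -> nu_mean k (2^-1 : R) 0 = k%:R * 2^-1.
Proof.
move=> k1; apply/nu_mean_eq_iff_drift_eq0 => //; first by apply/andP; split; lra.
rewrite /drift; under eq_bigr do rewrite mul0r expR0 mulr1.
rewrite sum_pgam_centered ?(ltnW k1) // (_ : 1 - 2^-1 = 2^-1 :> R) ?subrr //.
by field.
Qed.

Lemma drift_root_between k g d : 0 <= g <= 1 -> 0 <= d <= 1 ->
  `|\sum_(1 <= j < k) pgam k g j * centered k g j| <=
    d / (k%:R + 1) * \sum_(1 <= j < k) pgam k g j * centered k g j ^+ 2 ->
  exists2 l, `|l| <= d & drift k g l = 0.
Proof.
move=> hg hd; rewrite ler_norml => /andP[S_ge S_le].
have neg : drift k g (- d) <= 0 by apply: le_trans (drift_le k g d hg hd) _; lra.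
have pos : 0 <= drift k g d by apply: le_trans (drift_ge k g d hg hd); lra.
have dd : - d <= d by case/andP: hd => d0 _; lra.
have [|l l_in root] := IVT (v := 0) dd (continuous_subspaceT (continuous_drift k g)).
  by rewrite ge_min le_max neg pos orbT.
by exists l => //; move: l_in; rewrite in_itv /= ler_norml.
Qed.

Lemma near_half_in01 g : `|g - 2^-1| <= 12^-1 -> 0 < g < 1.
Proof. by rewrite ler_norml => /andP[? ?]; apply/andP; split; lra. Qed.

Lemma centered1_le k g : (3 <= k)%N -> `|g - 2^-1| <= 12^-1 ->
  centered k g 1 <= - 4^-1.
Proof.
move=> k3; rewrite ler_norml /centered => /andP[g_ge g_le].
have : 3 <= k%:R :> R by rewrite (ler_nat R 3 k).
nra.
Qed.

Lemma pgam1_ge k g : (3 <= k)%N -> `|g - 2^-1| <= 12^-1 -> (4 ^+ k)^-1 <= pgam k g 1.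
Proof.
move=> k3 near; have := centered1_le k g k3 near; rewrite /centered => kg.
move: near; rewrite ler_norml => /andP[g_ge g_le].
have k0 : (0 < k)%N by rewrite (ltn_trans _ k3).
rewrite pgam1 subn1 -exprVn -[in X in X <= _](prednK k0) exprS.
apply: ler_pM; rewrite ?invr_ge0 ?exprn_ge0 //; first lra.
by apply: lerXn2r; rewrite ?nnegrE; lra.
Qed.

Lemma sum_pgam_centered_sqr_ge k g : (3 <= k)%N -> `|g - 2^-1| <= 12^-1 ->
  (16 * 4 ^+ k)^-1 <= \sum_(1 <= j < k) pgam k g j * centered k g j ^+ 2.
Proof.
move=> k3 near; have /andP[g0 g1] := near_half_in01 g near.
have hg : 0 <= g <= 1 by rewrite !ltW.
rewrite big_ltn ?(ltnW k3) //= -[X in X <= _]addr0 invfM mulrC.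
apply: lerD; last by apply: sumr_ge0 => j _; rewrite mulr_ge0 ?pgam_ge0 ?sqr_ge0.
apply: ler_pM; rewrite ?invr_ge0 ?exprn_ge0 ?pgam1_ge //.
by have := centered1_le k g k3 near; nra.
Qed.

(* Chosen so that [tilt_constant k * e / (k + 1) / (16 * 4^k) = 2 k^2 e]. *)
Definition tilt_constant k : nat := 32 * k ^ 2 * k.+1 * 4 ^ k.

Lemma tilt_constantE k :
  (tilt_constant k)%:R = 32 * k%:R ^+ 2 * (k%:R + 1) * 4 ^+ k :> R.
Proof. by rewrite /tilt_constant !natrM !natrX natr1. Qed.

Lemma tilt_constant_ge12 k : (0 < k)%N -> 12 <= (tilt_constant k)%:R :> R.
Proof.
move=> k0; rewrite ler_nat /tilt_constant.
by rewrite (@leq_trans 32) // -!mulnA leq_pmulr // !muln_gt0 expn_gt0 k0.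
Qed.

Lemma drift_root_near_half k g e : (3 <= k)%N -> `|g - 2^-1| <= 12^-1 ->
  (tilt_constant k)%:R * e <= 1 -> `|g - 2^-1| <= e ->
  exists2 l, `|l| <= (tilt_constant k)%:R * e & drift k g l = 0.
Proof.
move=> k3 near ce ge; set d := _ * e.
have k0 : (0 < k)%N by rewrite (leq_trans _ k3).
have e0 : 0 <= e := le_trans (normr_ge0 _) ge.
have /andP[g0 g1] := near_half_in01 g near.
have hg : 0 <= g <= 1 by rewrite !ltW.
have d0 : 0 <= d by rewrite mulr_ge0.
have hd : 0 <= d <= 1 by rewrite d0 ce.
apply: drift_root_between => //.
apply: le_trans (norm_sum_pgam_centered_le k g k0 hg) _.
have dK : 0 <= d / (k%:R + 1) by rewrite divr_ge0 // addr_ge0.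
apply: le_trans _ (ler_wpM2l dK (sum_pgam_centered_sqr_ge k g k3 near)).
have -> : d / (k%:R + 1) * (16 * 4 ^+ k)^-1 = 2 * k%:R ^+ 2 * e.
  by rewrite /d tilt_constantE; field; rewrite ?pnatr_eq0 ?expf_neq0 ?lt0r_neq0.
by rewrite ler_wpM2l ?mulr_ge0 ?sqr_ge0.
Qed.

Lemma nu_mean_root_near_half k g e : (3 <= k)%N ->
  (tilt_constant k)%:R * e <= 1 -> `|g - 2^-1| <= e ->
  exists l : R,
    [/\ nu_mean k g l = k%:R * g,
        (forall l' : R, nu_mean k g l' = k%:R * g -> l' = l) &
        `|l| <= (tilt_constant k)%:R * e].
Proof.
move=> k3 ce ge; have k1 : (1 < k)%N by rewrite (leq_trans _ k3).
have e0 : 0 <= e := le_trans (normr_ge0 _) ge.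
have c12 := tilt_constant_ge12 k (ltnW k1).
have near : `|g - 2^-1| <= 12^-1 by apply: le_trans ge _; nra.
have hg := near_half_in01 g near.
have t1 : centered k g 1 != 0.
  by rewrite lt_eqF // (le_lt_trans (centered1_le k g k3 near)).
have [l hl root] := drift_root_near_half k g e k3 near ce ge.
exists l; split => //; first exact/nu_mean_eq_iff_drift_eq0.
move=> l' /nu_mean_eq_iff_drift_eq0 root'.
by apply: (drift_inj k g k1 hg t1); rewrite root' ?root.
Qed.

Lemma natr_mul_powR_third_le1 m n : (0 < m)%N -> (m ^ 3 <= n)%N ->
  m%:R * n%:R `^ (- 3^-1) <= 1 :> R.
Proof.
move=> m0 mn; have n0 : (0 < n)%N by rewrite (leq_trans _ mn) ?expn_gt0 ?m0.
rewrite -(@expr_le1 _ 3) ?mulr_ge0 ?powR_ge0 // exprMn.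
rewrite -(powR_mulrn 3 (powR_ge0 _ _)) -powRrM.
rewrite (_ : - 3^-1 * 3%:R = -1 :> R); last by field.
by rewrite powR_inv1 ?ler0n // -natrX ler_pdivrMr ?ltr0n // mul1r ler_nat.
Qed.

End Tilt.

Theorem lemma2p5 (R : realType) (k : nat) (hk : (3 <= k)%N) :
  exists (n0 : nat) (C : R),
    nu_mean k (2^-1 : R) 0 = k%:R * 2^-1 /\
    forall n : nat, (n0 <= n)%N ->
    forall g : R, `|g - 2^-1| <= n%:R `^ (- 3^-1) ->
      exists l : R,
        [/\ nu_mean k g l = k%:R * g,
            (forall l' : R, nu_mean k g l' = k%:R * g -> l' = l) &
            `|l| <= C * n%:R `^ (- 3^-1)].
Proof.
exists (tilt_constant k ^ 3)%N, (tilt_constant k)%:R.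
split=> [|n n_ge g near]; first by rewrite nu_mean_half // (leq_trans _ hk).
apply: nu_mean_root_near_half near => //.
apply: natr_mul_powR_third_le1 n_ge.
by rewrite /tilt_constant !muln_gt0 !expn_gt0 (leq_trans _ hk).
Qed.
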